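(* The locus of the nine-point center $X_5$ (triangle center function $h=s_2s_3\,[s_1^2(s_2^2+s_3^2)-(s_2^2-s_3^2)^2]$) over the 3-periodics of $E$ is the ellipse $x^2/a_5^2+y^2/b_5^2=1$, where $$a_5=\frac{-w_5'(a,b)+w_5''(a,b)\,\delta}{w_5(a,b)},\qquad b_5=\frac{w_5'(b,a)-w_5''(b,a)\,\delta}{w_5(b,a)},$$ with $w_5'(u,v)=u^2(u^2+3v^2)$, $w_5''(u,v)=3u^2+v^2$, $w_5(u,v)=4u(u^2-v^2)$.
   Context: Fix real numbers $a>b>0$, let $E$ be the ellipse $x^2/a^2+y^2/b^2=1$ and $\delta=\sqrt{a^4-a^2b^2+b^4}$. A 3-periodic is a non-degenerate triangle $P_1P_2P_3$ with all vertices on $E$ such that at each vertex $P_j$ the normal line to $E$ at $P_j$ bisects the interior angle of the triangle at $P_j$. For a triangle let $s_1=|P_2P_3|$, $s_2=|P_3P_1|$, $s_3=|P_1P_2|$. Given a triangle center function $h(s_1,s_2,s_3)$, the center $X_h$ is the point with trilinears $p:q:r=h(s_1,s_2,s_3):h(s_2,s_3,s_1):h(s_3,s_1,s_2)$, i.e. the Cartesian point $\dfrac{p s_1P_1+q s_2P_2+r s_3P_3}{p s_1+q s_2+r s_3}$. The locus of $X_h$ is the set of points $X_h(T)$ over all 3-periodics $T$. *)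

From Stdlib Require Import Reals Lra.
Open Scope R_scope.

Definition pt := (R * R)%type.

Definition dist (P Q : pt) : R :=
  sqrt ((fst P - fst Q)^2 + (snd P - snd Q)^2).

Definition on_ellipse (a b : R) (P : pt) : Prop :=
  (fst P)^2 / a^2 + (snd P)^2 / b^2 = 1.

Definition cross (u1 u2 v1 v2 : R) : R := u1 * v2 - u2 * v1.

Definition nondegenerate (P1 P2 P3 : pt) : Prop :=
  cross (fst P2 - fst P1) (snd P2 - snd P1) (fst P3 - fst P1) (snd P3 - snd P1) <> 0.

(* The normal line to E at P (direction (x/a^2, y/b^2)) bisects the interior
   angle of triangle P Q S at P, i.e. is parallel to the internal bisector
   direction (Q-P)/|Q-P| + (S-P)/|S-P|. *)
Definition normal_bisects (a b : R) (P Q S : pt) : Prop :=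
  cross (fst P / a^2) (snd P / b^2)
        ((fst Q - fst P) / dist Q P + (fst S - fst P) / dist S P)
        ((snd Q - snd P) / dist Q P + (snd S - snd P) / dist S P) = 0.

Definition periodic3 (a b : R) (P1 P2 P3 : pt) : Prop :=
  nondegenerate P1 P2 P3 /\
  on_ellipse a b P1 /\ on_ellipse a b P2 /\ on_ellipse a b P3 /\
  normal_bisects a b P1 P2 P3 /\
  normal_bisects a b P2 P3 P1 /\
  normal_bisects a b P3 P1 P2.

(* Triangle center X_h from trilinears h(s1,s2,s3):h(s2,s3,s1):h(s3,s1,s2). *)
Definition center (h : R -> R -> R -> R) (P1 P2 P3 : pt) : pt :=
  let s1 := dist P2 P3 in
  let s2 := dist P3 P1 in
  let s3 := dist P1 P2 in
  let p := h s1 s2 s3 in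
  let q := h s2 s3 s1 in
  let r := h s3 s1 s2 in
  let D := p * s1 + q * s2 + r * s3 in
  ((p * s1 * fst P1 + q * s2 * fst P2 + r * s3 * fst P3) / D,
   (p * s1 * snd P1 + q * s2 * snd P2 + r * s3 * snd P3) / D).

Definition h5 (s1 s2 s3 : R) : R :=
  s2 * s3 * (s1^2 * (s2^2 + s3^2) - (s2^2 - s3^2)^2).

Definition delta (a b : R) : R := sqrt (a^4 - a^2 * b^2 + b^4).

Definition w5' (u v : R) : R := u^2 * (u^2 + 3 * v^2).
Definition w5'' (u v : R) : R := 3 * u^2 + v^2.
Definition w5 (u v : R) : R := 4 * u * (u^2 - v^2).

Definition a5 (a b : R) : R := (- w5' a b + w5'' a b * delta a b) / w5 a b.
Definition b5 (a b : R) : R := (w5' b a - w5'' b a * delta a b) / w5 b a.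

Definition locus (a b : R) (h : R -> R -> R -> R) (X : pt) : Prop :=
  exists P1 P2 P3 : pt, periodic3 a b P1 P2 P3 /\ center h P1 P2 P3 = X.

From Pilot Require Import Defs.
From Stdlib Require Import Reals Lra Psatz.
Open Scope R_scope.

(* Write the vertices of a triangle inscribed in E as (a c_i, b s_i) with u_i = (c_i, s_i) on the
   unit circle, and put p = a^2 - delta, q = delta - b^2, so that a^2 (q - p) = q (q + 2 p) and
   b^2 (q - p) = p (p + 2 q).  The normal at a vertex bisects the angle there iff chord_mu, the
   squared component of the normal along the unit chord direction, is the same for both sides, so
   in a 3-periodic all three chords share one value m.  Each relation chord_mu = m is bilinear in
   the two unit vectors; intersecting the line it defines for u1 with the unit circle shows that
   the triangle closes only if 3 - 2 m (a^2 + b^2) - m^2 (a^2 - b^2)^2 = 0, i.e.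
   m = (q - p) / (p + q)^2.  Then every pair of vertices satisfies
   (p + q) (p c_i c_j + q s_i s_j) + p q = 0, and conversely every u1 is a vertex of such a
   triangle.  As the pairwise diag (p, q) products of the vertices agree, the circumcenter, hence
   the nine-point center, is a fixed diagonal rescaling of S = u1 + u2 + u3, and
   |S| = (q - p) / (p + q).  So X5 lies on an ellipse, and it covers all of it: S is odd in each
   coordinate of u1, and its second coordinate runs from 0 to (q - p) / (p + q) along a quarter
   circle. *)

Lemma sum_sq_pos (u v : R) : ~ (u = 0 /\ v = 0) -> 0 < u^2 + v^2.
Proof.
  intro Huv.
  destruct (Rle_lt_or_eq_dec 0 (u^2 + v^2)) as [Hlt | Heq]; [nra | exact Hlt |].
  exfalso; apply Huv, Rplus_sqr_eq_0; unfold Rsqr; lra.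
Qed.

Lemma sq_pos (x : R) : x <> 0 -> 0 < x^2.
Proof. rewrite <- Rsqr_pow2; apply Rsqr_pos_lt. Qed.

Lemma cos_sin_unit (t : R) : cos t ^ 2 + sin t ^ 2 = 1.
Proof. rewrite <- !Rsqr_pow2, Rplus_comm; apply sin2_cos2. Qed.

Definition h5_weight (S1 S2 S3 : R) : R := S1 * (S2 + S3) - (S2 - S3)^2.

Lemma center_h5_barycentric (x1 y1 x2 y2 x3 y3 : R) :
  nondegenerate (x1, y1) (x2, y2) (x3, y3) ->
  let S1 := (x2 - x3)^2 + (y2 - y3)^2 in
  let S2 := (x3 - x1)^2 + (y3 - y1)^2 in
  let S3 := (x1 - x2)^2 + (y1 - y2)^2 in
  let w1 := h5_weight S1 S2 S3 in
  let w2 := h5_weight S2 S3 S1 in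
  let w3 := h5_weight S3 S1 S2 in
  center h5 (x1, y1) (x2, y2) (x3, y3)
  = ((w1 * x1 + w2 * x2 + w3 * x3) / (w1 + w2 + w3),
     (w1 * y1 + w2 * y2 + w3 * y3) / (w1 + w2 + w3)).
Proof.
  intros HK S1 S2 S3 w1 w2 w3; unfold nondegenerate, cross in HK; cbn [fst snd] in HK.
  assert (Hw : w1 + w2 + w3 = 8 * ((x2 - x1) * (y3 - y1) - (y2 - y1) * (x3 - x1))^2)
    by (unfold w1, w2, w3, h5_weight, S1, S2, S3; ring).
  assert (HS1 : 0 < S1).
  { apply sum_sq_pos; intros [e e']; apply HK.
    replace x3 with x2 by lra; replace y3 with y2 by lra; ring. }
  assert (HS2 : 0 < S2).
  { apply sum_sq_pos; intros [e e']; apply HK.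
    replace x3 with x1 by lra; replace y3 with y1 by lra; ring. }
  assert (HS3 : 0 < S3).
  { apply sum_sq_pos; intros [e e']; apply HK.
    replace x2 with x1 by lra; replace y2 with y1 by lra; ring. }
  unfold center, h5, Defs.dist; cbn [fst snd]; fold S1 S2 S3.
  rewrite !pow2_sqrt by lra.
  pose proof (sqrt_lt_R0 S1 HS1); pose proof (sqrt_lt_R0 S2 HS2); pose proof (sqrt_lt_R0 S3 HS3).
  assert (0 < w1 + w2 + w3) by (rewrite Hw; pose proof (sq_pos _ HK); lra).
  set (d1 := sqrt S1) in *; set (d2 := sqrt S2) in *; set (d3 := sqrt S3) in *.
  assert (Hd : forall t1 t2 t3 : R,
             d2 * d3 * t1 * d1 + d3 * d1 * t2 * d2 + d1 * d2 * t3 * d3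
             = d1 * d2 * d3 * (t1 + t2 + t3)) by (intros; ring).
  unfold w1, w2, w3, h5_weight in *; rewrite Hd.
  f_equal; field; repeat split; lra.
Qed.

Lemma center_h5_circumcenter (x1 y1 x2 y2 x3 y3 ox oy : R) :
  nondegenerate (x1, y1) (x2, y2) (x3, y3) ->
  2 * (x2 - x1) * ox + 2 * (y2 - y1) * oy = x2^2 + y2^2 - x1^2 - y1^2 ->
  2 * (x3 - x1) * ox + 2 * (y3 - y1) * oy = x3^2 + y3^2 - x1^2 - y1^2 ->
  center h5 (x1, y1) (x2, y2) (x3, y3) = ((x1 + x2 + x3 - ox) / 2, (y1 + y2 + y3 - oy) / 2).
Proof.
  intros HK E2 E3; rewrite (center_h5_barycentric _ _ _ _ _ _ HK).
  unfold nondegenerate, cross in HK; cbn [fst snd] in HK.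
  set (K := (x2 - x1) * (y3 - y1) - (y2 - y1) * (x3 - x1)) in HK.
  assert (Hox : ox = (2 * (y3 - y1) * (x2^2 + y2^2 - x1^2 - y1^2)
                      - 2 * (y2 - y1) * (x3^2 + y3^2 - x1^2 - y1^2)) / (4 * K)).
  { rewrite <- E2, <- E3; unfold K; field; exact HK. }
  assert (Hoy : oy = (2 * (x2 - x1) * (x3^2 + y3^2 - x1^2 - y1^2)
                      - 2 * (x3 - x1) * (x2^2 + y2^2 - x1^2 - y1^2)) / (4 * K)).
  { rewrite <- E2, <- E3; unfold K; field; exact HK. }
  set (S1 := (x2 - x3)^2 + (y2 - y3)^2); set (S2 := (x3 - x1)^2 + (y3 - y1)^2);
  set (S3 := (x1 - x2)^2 + (y1 - y2)^2).
  assert (Hw : h5_weight S1 S2 S3 + h5_weight S2 S3 S1 + h5_weight S3 S1 S2 = 8 * K^2)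
    by (unfold h5_weight, S1, S2, S3, K; ring).
  pose proof (sq_pos _ HK).
  rewrite Hw, Hox, Hoy; unfold h5_weight, S1, S2, S3, K in *.
  f_equal; field; lra.
Qed.

(* The point of the line n1 x + n2 y = al with n1 y - n2 x = r; it lies on the unit circle iff
   r^2 = n1^2 + n2^2 - al^2. *)
Definition chord_x (n1 n2 al r : R) : R := (al * n1 - r * n2) / (n1^2 + n2^2).
Definition chord_y (n1 n2 al r : R) : R := (al * n2 + r * n1) / (n1^2 + n2^2).

Section UnitChord.

Variables n1 n2 al : R.
Hypothesis n_nz : n1^2 + n2^2 <> 0.

Lemma chord_on_line (r : R) : n1 * chord_x n1 n2 al r + n2 * chord_y n1 n2 al r = al.
Proof. unfold chord_x, chord_y; field; exact n_nz. Qed.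

Lemma chord_unit (r : R) :
  r^2 = n1^2 + n2^2 - al^2 -> chord_x n1 n2 al r ^ 2 + chord_y n1 n2 al r ^ 2 = 1.
Proof.
  intro Hr; unfold chord_x, chord_y.
  replace 1 with ((al^2 + r^2) / (n1^2 + n2^2)) by (rewrite Hr; field; exact n_nz).
  field; exact n_nz.
Qed.

Lemma chord_sum_x (r : R) :
  chord_x n1 n2 al r + chord_x n1 n2 al (- r) = 2 * al * n1 / (n1^2 + n2^2).
Proof. unfold chord_x; field; exact n_nz. Qed.

Lemma chord_sum_y (r : R) :
  chord_y n1 n2 al r + chord_y n1 n2 al (- r) = 2 * al * n2 / (n1^2 + n2^2).
Proof. unfold chord_y; field; exact n_nz. Qed.

Lemma chord_diag_product (k1 k2 r : R) :
  k1 * chord_x n1 n2 al r * chord_x n1 n2 al (- r)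
  + k2 * chord_y n1 n2 al r * chord_y n1 n2 al (- r)
  = (al^2 * (k1 * n1^2 + k2 * n2^2) - r^2 * (k1 * n2^2 + k2 * n1^2)) / (n1^2 + n2^2)^2.
Proof. unfold chord_x, chord_y; field; exact n_nz. Qed.

Lemma chord_opposite_distinct (r : R) :
  r <> 0 ->
  ~ (chord_x n1 n2 al r = chord_x n1 n2 al (- r) /\ chord_y n1 n2 al r = chord_y n1 n2 al (- r)).
Proof.
  intros Hr [Ex Ey].
  assert (E : n2 * (chord_x n1 n2 al r - chord_x n1 n2 al (- r))
              - n1 * (chord_y n1 n2 al r - chord_y n1 n2 al (- r)) = - 2 * r)
    by (unfold chord_x, chord_y; field; exact n_nz).
  rewrite Ex, Ey in E; lra.
Qed.

Lemma on_line_chord (x y : R) :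
  n1 * x + n2 * y = al ->
  x = chord_x n1 n2 al (n1 * y - n2 * x) /\ y = chord_y n1 n2 al (n1 * y - n2 * x).
Proof. intros <-; unfold chord_x, chord_y; split; field; exact n_nz. Qed.

Lemma unit_on_line_sq (x y : R) :
  x^2 + y^2 = 1 -> n1 * x + n2 * y = al -> (n1 * y - n2 * x)^2 = n1^2 + n2^2 - al^2.
Proof.
  intros Hu <-.
  replace (n1^2 + n2^2) with ((n1^2 + n2^2) * (x^2 + y^2)) at 1 by (rewrite Hu; ring).
  ring.
Qed.

Lemma unit_on_line_opposite (x y x' y' : R) :
  x^2 + y^2 = 1 -> n1 * x + n2 * y = al ->
  x'^2 + y'^2 = 1 -> n1 * x' + n2 * y' = al ->
  ~ (x = x' /\ y = y') -> n1 * y' - n2 * x' = - (n1 * y - n2 * x).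
Proof.
  intros Hu Hl Hu' Hl' Hne.
  pose proof (unit_on_line_sq x y Hu Hl) as Hr; pose proof (unit_on_line_sq x' y' Hu' Hl') as Hr'.
  destruct (on_line_chord x y Hl) as [Ex Ey].
  destruct (on_line_chord x' y' Hl') as [Ex' Ey'].
  assert (Hsq : (n1 * y' - n2 * x' - (n1 * y - n2 * x))
                * (n1 * y' - n2 * x' + (n1 * y - n2 * x)) = 0) by nra.
  destruct (Rmult_integral _ _ Hsq) as [Heq | Hopp]; [| lra].
  exfalso; apply Hne.
  replace (n1 * y' - n2 * x') with (n1 * y - n2 * x) in Ex', Ey' by lra.
  split; congruence.
Qed.

End UnitChord.

Lemma unit_not_collinear (x1 y1 x2 y2 x3 y3 : R) :
  x1^2 + y1^2 = 1 -> x2^2 + y2^2 = 1 -> x3^2 + y3^2 = 1 ->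
  ~ (x1 = x2 /\ y1 = y2) -> ~ (x1 = x3 /\ y1 = y3) -> ~ (x2 = x3 /\ y2 = y3) ->
  (x2 - x1) * (y3 - y1) - (y2 - y1) * (x3 - x1) <> 0.
Proof.
  intros H1 H2 H3 D12 D13 D23 Hcol.
  set (n1 := y1 - y2); set (n2 := x2 - x1); set (al := n1 * x1 + n2 * y1).
  assert (Hn : n1^2 + n2^2 <> 0).
  { enough (0 < n1^2 + n2^2) by lra.
    apply sum_sq_pos; intros [e e']; apply D12; unfold n1, n2 in *; split; lra. }
  assert (L1 : n1 * x1 + n2 * y1 = al) by reflexivity.
  assert (L2 : n1 * x2 + n2 * y2 = al) by (unfold al, n1, n2; ring).
  assert (L3 : n1 * x3 + n2 * y3 = al).
  { unfold al; apply Rminus_diag_uniq; rewrite <- Hcol; unfold n1, n2; ring. }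
  pose proof (unit_on_line_opposite _ _ _ Hn _ _ _ _ H1 L1 H2 L2 D12) as O12.
  pose proof (unit_on_line_opposite _ _ _ Hn _ _ _ _ H1 L1 H3 L3 D13) as O13.
  pose proof (unit_on_line_opposite _ _ _ Hn _ _ _ _ H2 L2 H3 L3 D23) as O23.
  destruct (on_line_chord _ _ _ Hn _ _ L1) as [E1 F1].
  destruct (on_line_chord _ _ _ Hn _ _ L2) as [E2 F2].
  (* the three values n1 y - n2 x are pairwise opposite, hence all zero *)
  assert (Hr : n1 * y2 - n2 * x2 = n1 * y1 - n2 * x1) by lra.
  rewrite Hr in E2, F2; apply D12; split; congruence.
Qed.

Lemma bisector_equal_dots (n1 n2 e1 e2 f1 f2 : R) :
  e1^2 + e2^2 = 1 -> f1^2 + f2^2 = 1 ->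
  n1 * e1 + n2 * e2 < 0 -> n1 * f1 + n2 * f2 < 0 ->
  cross n1 n2 (e1 + f1) (e2 + f2) = 0 -> n1 * e1 + n2 * e2 = n1 * f1 + n2 * f2.
Proof.
  unfold cross; intros He Hf Hde Hdf Hc.
  (* Lagrange's identity turns equal (up to sign) cross products into equal squared dots *)
  assert (Hsq : (n1 * e1 + n2 * e2)^2 = (n1 * f1 + n2 * f2)^2).
  { replace ((n1 * e1 + n2 * e2)^2) with ((n1^2 + n2^2) * (e1^2 + e2^2) - (n1 * e2 - n2 * e1)^2)
      by ring.
    replace ((n1 * f1 + n2 * f2)^2) with ((n1^2 + n2^2) * (f1^2 + f2^2) - (n1 * f2 - n2 * f1)^2)
      by ring.
    rewrite He, Hf; replace (n1 * f2 - n2 * f1) with (- (n1 * e2 - n2 * e1)) by lra; ring. }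
  nra.
Qed.

Lemma equal_dots_bisector (n1 n2 e1 e2 f1 f2 : R) :
  n1^2 + n2^2 <> 0 -> e1^2 + e2^2 = 1 -> f1^2 + f2^2 = 1 -> ~ (e1 = f1 /\ e2 = f2) ->
  n1 * e1 + n2 * e2 = n1 * f1 + n2 * f2 -> cross n1 n2 (e1 + f1) (e2 + f2) = 0.
Proof.
  intros Hn He Hf Hne Hd; unfold cross.
  pose proof (unit_on_line_opposite _ _ _ Hn _ _ _ _ He eq_refl Hf (eq_sym Hd) Hne).
  lra.
Qed.

(* For P = (a c, b s) and P' = (a c', b s') on the ellipse, |PP'|^2 = chord_gap * chord_cogap,
   and chord_mu is the square of the component of the normal (c/a, s/b) at P along PP' / |PP'|. *)
Definition chord_gap (c s c' s' : R) : R := 1 - c * c' - s * s'.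
Definition chord_cogap (a b c s c' s' : R) : R :=
  a^2 * (1 - c * c' + s * s') + b^2 * (1 + c * c' - s * s').
Definition chord_mu (a b c s c' s' : R) : R := chord_gap c s c' s' / chord_cogap a b c s c' s'.

Section EllipseChord.

Variables a b c s c' s' : R.
Hypotheses (a_nz : a <> 0) (b_nz : b <> 0).
Hypotheses (cs_unit : c^2 + s^2 = 1) (cs'_unit : c'^2 + s'^2 = 1).

Lemma chord_gap_pos : ~ (c = c' /\ s = s') -> 0 < chord_gap c s c' s'.
Proof.
  intro Hne.
  assert (0 < (c - c')^2 + (s - s')^2) by (apply sum_sq_pos; intros [e e']; apply Hne; lra).
  unfold chord_gap; nra.
Qed.

Lemma chord_cogap_pos : 0 < chord_cogap a b c s c' s'.
Proof.
  assert (Ht : (c * c' - s * s')^2 + (c * s' + s * c')^2 = 1)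
    by (replace 1 with ((c^2 + s^2) * (c'^2 + s'^2)) by (rewrite cs_unit, cs'_unit; ring); ring).
  set (t := c * c' - s * s') in Ht.
  assert (Ht1 : -1 <= t <= 1) by (pose proof (pow2_ge_0 (c * s' + s * c')); split; nra).
  pose proof (sq_pos a a_nz); pose proof (sq_pos b b_nz).
  replace (chord_cogap a b c s c' s') with (a^2 * (1 - t) + b^2 * (1 + t))
    by (unfold chord_cogap, t; ring).
  destruct (Rle_dec t 0); nra.
Qed.

Lemma dist_ellipse_sq :
  Defs.dist (a * c', b * s') (a * c, b * s) ^ 2 = chord_gap c s c' s' * chord_cogap a b c s c' s'.
Proof.
  unfold Defs.dist; cbn [fst snd].
  rewrite pow2_sqrt
    by (pose proof (pow2_ge_0 (a * c' - a * c)); pose proof (pow2_ge_0 (b * s' - b * s)); lra).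
  assert (E : (a * c' - a * c)^2 + (b * s' - b * s)^2
              - chord_gap c s c' s' * chord_cogap a b c s c' s'
              = (a^2 * s'^2 + b^2 * c'^2) * (c^2 + s^2 - 1)
                + (a^2 * (1 - c^2) + b^2 * (1 - s^2)) * (c'^2 + s'^2 - 1))
    by (unfold chord_gap, chord_cogap; ring).
  rewrite cs_unit, cs'_unit in E; lra.
Qed.

Hypothesis distinct : ~ (c = c' /\ s = s').

Local Notation d := (Defs.dist (a * c', b * s') (a * c, b * s)).

Lemma dist_ellipse_pos : 0 < d.
Proof.
  pose proof (chord_gap_pos distinct); pose proof chord_cogap_pos; pose proof dist_ellipse_sq.
  assert (0 <= d) by apply sqrt_pos.
  destruct (Req_dec d 0) as [Hd | Hd]; [rewrite Hd in *; nra | lra].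
Qed.

Lemma ellipse_chord_dir_unit : ((a * c' - a * c) / d)^2 + ((b * s' - b * s) / d)^2 = 1.
Proof.
  pose proof dist_ellipse_pos.
  assert (Hd : d^2 = (a * c' - a * c)^2 + (b * s' - b * s)^2).
  { unfold d, Defs.dist; cbn [fst snd]; apply pow2_sqrt.
    pose proof (pow2_ge_0 (a * c' - a * c)); pose proof (pow2_ge_0 (b * s' - b * s)); lra. }
  transitivity (((a * c' - a * c)^2 + (b * s' - b * s)^2) / d^2);
    [field | rewrite <- Hd; field]; lra.
Qed.

Lemma ellipse_normal_dot_dir :
  (a * c / a^2) * ((a * c' - a * c) / d) + (b * s / b^2) * ((b * s' - b * s) / d)
  = - (chord_gap c s c' s' / d).
Proof.
  pose proof dist_ellipse_pos.
  transitivity ((c * c' + s * s' - (c^2 + s^2)) / d); [field; repeat split; lra |].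
  rewrite cs_unit; unfold chord_gap; field; lra.
Qed.

Lemma chord_mu_sq : chord_mu a b c s c' s' = (chord_gap c s c' s' / d)^2.
Proof.
  pose proof dist_ellipse_pos; pose proof chord_cogap_pos; pose proof (chord_gap_pos distinct).
  unfold Rdiv; rewrite Rpow_mult_distr, pow_inv, dist_ellipse_sq; unfold chord_mu; field; lra.
Qed.

End EllipseChord.

Lemma chord_mu_sym (a b c s c' s' : R) : chord_mu a b c s c' s' = chord_mu a b c' s' c s.
Proof. unfold chord_mu, chord_gap, chord_cogap; f_equal; ring. Qed.

Lemma nondegenerate_scaled_distinct (a b c1 s1 c2 s2 c3 s3 : R) :
  nondegenerate (a * c1, b * s1) (a * c2, b * s2) (a * c3, b * s3) ->
  ~ (c1 = c2 /\ s1 = s2) /\ ~ (c1 = c3 /\ s1 = s3) /\ ~ (c2 = c3 /\ s2 = s3).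
Proof.
  unfold nondegenerate, cross; cbn [fst snd].
  intro Hnd; repeat split; intros [-> ->]; apply Hnd; ring.
Qed.

Lemma on_ellipse_scaled (a b x y : R) :
  a <> 0 -> b <> 0 -> on_ellipse a b (x, y) ->
  (x / a)^2 + (y / b)^2 = 1 /\ (x, y) = (a * (x / a), b * (y / b)).
Proof.
  unfold on_ellipse; cbn [fst snd]; intros Ha Hb H; split.
  - rewrite <- H; field; split; assumption.
  - f_equal; field; assumption.
Qed.

Lemma ellipse_normal_nz (a b c s : R) :
  a <> 0 -> b <> 0 -> c^2 + s^2 = 1 -> (a * c / a^2)^2 + (b * s / b^2)^2 <> 0.
Proof.
  intros Ha Hb H.
  replace ((a * c / a^2)^2 + (b * s / b^2)^2) with ((c / a)^2 + (s / b)^2) by (field; lra).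
  enough (0 < (c / a)^2 + (s / b)^2) by lra.
  apply sum_sq_pos; intros [e e'].
  assert (c = 0) by (apply (Rmult_eq_reg_r (/ a)); [lra | apply Rinv_neq_0_compat; lra]).
  assert (s = 0) by (apply (Rmult_eq_reg_r (/ b)); [lra | apply Rinv_neq_0_compat; lra]).
  subst; lra.
Qed.

Lemma ellipse_chord_dirs_distinct (a b c s c' s' c'' s'' : R) :
  a <> 0 -> b <> 0 -> c^2 + s^2 = 1 -> c'^2 + s'^2 = 1 -> c''^2 + s''^2 = 1 ->
  ~ (c = c' /\ s = s') -> ~ (c = c'' /\ s = s'') -> ~ (c' = c'' /\ s' = s'') ->
  let d' := Defs.dist (a * c', b * s') (a * c, b * s) in
  let d'' := Defs.dist (a * c'', b * s'') (a * c, b * s) in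
  ~ ((a * c' - a * c) / d' = (a * c'' - a * c) / d''
     /\ (b * s' - b * s) / d' = (b * s'' - b * s) / d'').
Proof.
  intros Ha Hb H H' H'' D' D'' D d' d'' [Ex Ey].
  pose proof (dist_ellipse_pos a b c s c' s' Ha Hb H H' D') as Hd'.
  pose proof (dist_ellipse_pos a b c s c'' s'' Ha Hb H H'' D'') as Hd''.
  fold d' d'' in Hd', Hd''.
  apply (unit_not_collinear c s c' s' c'' s'' H H' H'' D' D'' D).
  assert (Ex' : a * c' - a * c = d' / d'' * (a * c'' - a * c)).
  { transitivity (d' * ((a * c' - a * c) / d')); [field | rewrite Ex; field]; lra. }
  assert (Ey' : b * s' - b * s = d' / d'' * (b * s'' - b * s)).
  { transitivity (d' * ((b * s' - b * s) / d')); [field | rewrite Ey; field]; lra. }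
  apply (Rmult_eq_reg_l (a * b)); [| apply Rmult_integral_contrapositive_currified; assumption].
  replace (a * b * ((c' - c) * (s'' - s) - (s' - s) * (c'' - c)))
    with ((a * c' - a * c) * (b * s'' - b * s) - (b * s' - b * s) * (a * c'' - a * c)) by ring.
  rewrite Ex', Ey'; ring.
Qed.

(* The normal at P bisects the angle QPS iff it has the same (negative) component along the unit
   vectors PQ and PS, and that component is - sqrt (chord_mu). *)
Lemma normal_bisects_ellipse_iff (a b c s c' s' c'' s'' : R) :
  a <> 0 -> b <> 0 -> c^2 + s^2 = 1 -> c'^2 + s'^2 = 1 -> c''^2 + s''^2 = 1 ->
  ~ (c = c' /\ s = s') -> ~ (c = c'' /\ s = s'') -> ~ (c' = c'' /\ s' = s'') ->
  normal_bisects a b (a * c, b * s) (a * c', b * s') (a * c'', b * s'')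
  <-> chord_mu a b c s c' s' = chord_mu a b c s c'' s''.
Proof.
  intros Ha Hb H H' H'' D' D'' D.
  pose proof (dist_ellipse_pos a b c s c' s' Ha Hb H H' D') as Hd'.
  pose proof (dist_ellipse_pos a b c s c'' s'' Ha Hb H H'' D'') as Hd''.
  pose proof (chord_gap_pos c s c' s' H H' D') as Hg'.
  pose proof (chord_gap_pos c s c'' s'' H H'' D'') as Hg''.
  pose proof (ellipse_normal_dot_dir a b c s c' s' Ha Hb H H' D') as Hdot'.
  pose proof (ellipse_normal_dot_dir a b c s c'' s'' Ha Hb H H'' D'') as Hdot''.
  pose proof (ellipse_chord_dir_unit a b c s c' s' Ha Hb H H' D') as He'.
  pose proof (ellipse_chord_dir_unit a b c s c'' s'' Ha Hb H H'' D'') as He''.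
  rewrite (chord_mu_sq a b c s c' s' Ha Hb H H' D'), (chord_mu_sq a b c s c'' s'' Ha Hb H H'' D'').
  unfold normal_bisects; cbn [fst snd].
  set (d' := Defs.dist (a * c', b * s') (a * c, b * s)) in *.
  set (d'' := Defs.dist (a * c'', b * s'') (a * c, b * s)) in *.
  assert (0 < chord_gap c s c' s' / d') by (apply Rdiv_lt_0_compat; lra).
  assert (0 < chord_gap c s c'' s'' / d'') by (apply Rdiv_lt_0_compat; lra).
  split.
  - intro Hbis; apply bisector_equal_dots in Hbis; [| assumption | assumption | lra | lra].
    rewrite Hdot', Hdot'' in Hbis.
    replace (chord_gap c s c' s' / d') with (chord_gap c s c'' s'' / d'') by lra; reflexivity.
  - intro Hmu.
    assert (Hg : chord_gap c s c' s' / d' = chord_gap c s c'' s'' / d'').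
    { apply Rsqr_inj; [lra | lra | rewrite !Rsqr_pow2; exact Hmu]. }
    apply equal_dots_bisector; try assumption.
    + apply ellipse_normal_nz; assumption.
    + exact (ellipse_chord_dirs_distinct a b c s c' s' c'' s'' Ha Hb H H' H'' D' D'' D).
    + rewrite Hdot', Hdot'', Hg; reflexivity.
Qed.

Lemma chord_gap_eq_mu_line (a b m c s c' s' : R) :
  chord_gap c s c' s' = m * chord_cogap a b c s c' s' <->
  (1 - m * (a^2 - b^2)) * c * c' + (1 + m * (a^2 - b^2)) * s * s' = 1 - m * (a^2 + b^2).
Proof.
  assert (E : chord_gap c s c' s' - m * chord_cogap a b c s c' s'
              = 1 - m * (a^2 + b^2)
                - ((1 - m * (a^2 - b^2)) * c * c' + (1 + m * (a^2 - b^2)) * s * s'))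
    by (unfold chord_gap, chord_cogap; ring).
  lra.
Qed.

(* With X = c1^2, Y = s1^2 and W = K1^2 X + K2^2 Y, the left side is
   W^2 (K1 c2 c3 + K2 s2 s3 - al) for the two points u2, u3 of the unit circle on the line
   K1 c1 x + K2 s1 y = al. *)
Lemma closure_factorization (m A B X Y K1 K2 al : R) :
  X + Y = 1 -> K1 = 1 - m * (A - B) -> K2 = 1 + m * (A - B) -> al = 1 - m * (A + B) ->
  al^2 * (K1^3 * X + K2^3 * Y)
  - (K1^2 * X + K2^2 * Y - al^2) * (K1 * K2 * (K1 * X + K2 * Y))
  - al * (K1^2 * X + K2^2 * Y)^2
  = - 2 * m * (3 - 2 * m * (A + B) - m^2 * (A - B)^2) * (B + (A - B) * Y)
      * (K1^2 + 4 * m * (A - B) * Y).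
Proof. intros HXY -> -> ->; replace X with (1 - Y) by lra; ring. Qed.

Section Closure.

Variables a b m c1 s1 c2 s2 c3 s3 : R.
Hypotheses (b_pos : 0 < b) (b_lt_a : b < a) (m_pos : 0 < m).
Hypotheses (u1_unit : c1^2 + s1^2 = 1) (u2_unit : c2^2 + s2^2 = 1) (u3_unit : c3^2 + s3^2 = 1).
Hypothesis u23_distinct : ~ (c2 = c3 /\ s2 = s3).

Let K1 := 1 - m * (a^2 - b^2).
Let K2 := 1 + m * (a^2 - b^2).
Let al := 1 - m * (a^2 + b^2).

Hypotheses (R12 : K1 * c1 * c2 + K2 * s1 * s2 = al) (R13 : K1 * c1 * c3 + K2 * s1 * s3 = al)
  (R23 : K1 * c2 * c3 + K2 * s2 * s3 = al).

Lemma closure_normal_nz : (K1 * c1)^2 + (K2 * s1)^2 <> 0.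
Proof.
  intro Hn; rewrite <- !Rsqr_pow2 in Hn; destruct (Rplus_sqr_eq_0 _ _ Hn) as [Z1 Z2].
  assert (Hal : al = 0) by (rewrite <- R12, Z1, Z2; ring).
  assert (0 < K1) by (unfold K1, al in *; nra).
  assert (0 < K2) by (unfold K2, al in *; nra).
  assert (c1 = 0) by (destruct (Rmult_integral _ _ Z1); [lra | assumption]).
  assert (s1 = 0) by (destruct (Rmult_integral _ _ Z2); [lra | assumption]).
  subst; lra.
Qed.

Lemma closure_cofactors_pos :
  0 < b^2 + (a^2 - b^2) * s1^2 /\ 0 < K1^2 + 4 * m * (a^2 - b^2) * s1^2.
Proof.
  assert (Hab : b^2 < a^2) by nra.
  split; [pose proof (pow2_ge_0 s1); nra |].
  destruct (Req_dec s1 0) as [Hs | Hs].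
  - assert (HK1 : K1 <> 0).
    { intro Z; apply closure_normal_nz; rewrite Z, Hs; ring. }
    rewrite Hs; pose proof (sq_pos K1 HK1); lra.
  - assert (0 < m * (a^2 - b^2) * s1^2)
      by (apply Rmult_lt_0_compat; [apply Rmult_lt_0_compat; lra | exact (sq_pos s1 Hs)]).
    pose proof (pow2_ge_0 K1); lra.
Qed.

Lemma closure_equation : 3 - 2 * m * (a^2 + b^2) - m^2 * (a^2 - b^2)^2 = 0.
Proof.
  pose proof closure_normal_nz as Hn.
  pose proof (unit_on_line_opposite _ _ _ Hn _ _ _ _ u2_unit R12 u3_unit R13 u23_distinct) as Hr3.
  pose proof (unit_on_line_sq _ _ _ _ _ u2_unit R12) as Hr2.
  destruct (on_line_chord _ _ _ Hn _ _ R12) as [E2 F2].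
  destruct (on_line_chord _ _ _ Hn _ _ R13) as [E3 F3].
  rewrite Hr3 in E3, F3.
  set (r := K1 * c1 * s2 - K2 * s1 * c2) in *.
  rewrite E2, F2, E3, F3, (chord_diag_product _ _ _ Hn), Hr2 in R23.
  pose proof (closure_factorization m (a^2) (b^2) (c1^2) (s1^2) K1 K2 al u1_unit
                eq_refl eq_refl eq_refl) as Hfac.
  destruct closure_cofactors_pos as [HX1 HX2].
  set (W := (K1 * c1)^2 + (K2 * s1)^2) in *.
  set (C := 3 - 2 * m * (a^2 + b^2) - m^2 * (a^2 - b^2)^2) in *.
  set (X1 := b^2 + (a^2 - b^2) * s1^2) in *.
  set (X2 := K1^2 + 4 * m * (a^2 - b^2) * s1^2) in *.
  assert (Hprod : - 2 * m * C * X1 * X2 = 0).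
  { rewrite <- Hfac.
    match type of R23 with ?L = _ =>
      transitivity (W^2 * (L - al)); [unfold W; field; exact Hn | rewrite R23; ring] end. }
  assert (0 < 2 * m * X1 * X2) by (repeat apply Rmult_lt_0_compat; lra).
  apply (Rmult_eq_reg_r (2 * m * X1 * X2)); [| lra].
  transitivity (- (- 2 * m * C * X1 * X2)); [ring | rewrite Hprod; ring].
Qed.

End Closure.

(* The circumcenter of a triangle (a c_i, b s_i) whose vertices have pairwise equal diag (p, q)
   products is (a^2 - b^2) / (2 (p - q)) * (p S_x / a, q S_y / b) with S = u1 + u2 + u3; the
   nine-point center is (P1 + P2 + P3 - O) / 2. *)
Lemma perp_bisector_equal_products (a b p q c1 s1 c2 s2 c3 s3 k : R) :
  a <> 0 -> b <> 0 -> p <> q -> c1^2 + s1^2 = 1 -> c2^2 + s2^2 = 1 ->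
  p * c1 * c3 + q * s1 * s3 = k -> p * c2 * c3 + q * s2 * s3 = k ->
  2 * (a * c2 - a * c1) * ((a^2 - b^2) * p * (c1 + c2 + c3) / (2 * (p - q) * a))
  + 2 * (b * s2 - b * s1) * ((a^2 - b^2) * q * (s1 + s2 + s3) / (2 * (p - q) * b))
  = (a * c2)^2 + (b * s2)^2 - (a * c1)^2 - (b * s1)^2.
Proof.
  intros Ha Hb Hpq H1 H2 R13 R23.
  assert (Hpq' : p - q <> 0) by lra.
  transitivity ((a^2 - b^2) / (p - q)
                * (p * (c2^2 - c1^2) + q * (s2^2 - s1^2)
                   + (p * c2 * c3 + q * s2 * s3) - (p * c1 * c3 + q * s1 * s3))).
  { field; repeat split; assumption. }
  rewrite R13, R23.
  replace (s2^2) with (1 - c2^2) by lra; replace (s1^2) with (1 - c1^2) by lra.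
  replace ((b * s2)^2) with (b^2 * (1 - c2^2)) by (rewrite <- H2; ring).
  replace ((b * s1)^2) with (b^2 * (1 - c1^2)) by (rewrite <- H1; ring).
  field; exact Hpq'.
Qed.

Lemma center_h5_equal_products (a b p q c1 s1 c2 s2 c3 s3 k : R) :
  a <> 0 -> b <> 0 -> p <> q ->
  c1^2 + s1^2 = 1 -> c2^2 + s2^2 = 1 -> c3^2 + s3^2 = 1 ->
  p * c1 * c2 + q * s1 * s2 = k -> p * c1 * c3 + q * s1 * s3 = k ->
  p * c2 * c3 + q * s2 * s3 = k ->
  nondegenerate (a * c1, b * s1) (a * c2, b * s2) (a * c3, b * s3) ->
  center h5 (a * c1, b * s1) (a * c2, b * s2) (a * c3, b * s3)
  = ((a - (a^2 - b^2) * p / (2 * (p - q) * a)) * (c1 + c2 + c3) / 2,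
     (b - (a^2 - b^2) * q / (2 * (p - q) * b)) * (s1 + s2 + s3) / 2).
Proof.
  intros Ha Hb Hpq H1 H2 H3 R12 R13 R23 Hnd.
  rewrite (center_h5_circumcenter _ _ _ _ _ _
             ((a^2 - b^2) * p * (c1 + c2 + c3) / (2 * (p - q) * a))
             ((a^2 - b^2) * q * (s1 + s2 + s3) / (2 * (p - q) * b)) Hnd).
  - assert (p - q <> 0) by lra.
    f_equal; field; repeat split; assumption.
  - exact (perp_bisector_equal_products a b p q c1 s1 c2 s2 c3 s3 k Ha Hb Hpq H1 H2 R13 R23).
  - replace (c1 + c2 + c3) with (c1 + c3 + c2) by ring.
    replace (s1 + s2 + s3) with (s1 + s3 + s2) by ring.
    apply (perp_bisector_equal_products a b p q c1 s1 c3 s3 c2 s2 k); try assumption.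
    rewrite <- R23; ring.
Qed.

(* For p = a^2 - delta and q = delta - b^2 this relation says chord_mu = (q - p) / (p + q)^2. *)
Definition periodic_pair (p q c s c' s' : R) : Prop :=
  (p + q) * (p * c * c' + q * s * s') + p * q = 0.

(* u1 + u2 + u3, where u2, u3 are the other two points of the unit circle in relation with u1 *)
Definition triple_sum_x (p q c s : R) : R :=
  c * (1 - 2 * p^2 * q / ((p + q) * (p^2 * c^2 + q^2 * s^2))).
Definition triple_sum_y (p q c s : R) : R :=
  s * (1 - 2 * p * q^2 / ((p + q) * (p^2 * c^2 + q^2 * s^2))).

Definition a5_pq (a p q : R) : R := (p^2 + 5 * p * q + 2 * q^2) / (4 * a * (p + q)).
Definition b5_pq (b p q : R) : R := (2 * p^2 + 5 * p * q + q^2) / (4 * b * (p + q)).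

Section PeriodicPairs.

Variables p q : R.
Hypotheses (p_pos : 0 < p) (p_lt_q : p < q).

Lemma pq_weight_ge (c s : R) : c^2 + s^2 = 1 -> p^2 <= p^2 * c^2 + q^2 * s^2.
Proof.
  intro H.
  assert (p^2 <= q^2) by (apply pow_incr; lra).
  pose proof (pow2_ge_0 s).
  replace (p^2) with (p^2 * (c^2 + s^2)) at 1 by (rewrite H; ring).
  nra.
Qed.

Lemma periodic_pair_sym (c s c' s' : R) :
  periodic_pair p q c s c' s' -> periodic_pair p q c' s' c s.
Proof. unfold periodic_pair; intro H; rewrite <- H; ring. Qed.

Lemma periodic_pair_line (c s c' s' : R) :
  periodic_pair p q c s c' s' <-> (p * c) * c' + (q * s) * s' = - (p * q) / (p + q).
Proof.
  assert (E : (p + q) * ((p * c) * c' + (q * s) * s' - - (p * q) / (p + q))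
              = (p + q) * (p * c * c' + q * s * s') + p * q) by (field; lra).
  unfold periodic_pair; split; intro H.
  - apply (Rmult_eq_reg_l (p + q)); [| lra].
    apply Rminus_diag_uniq; rewrite <- Rmult_minus_distr_l, E; exact H.
  - rewrite <- E, H; ring.
Qed.

Lemma periodic_pair_irrefl (c s : R) : c^2 + s^2 = 1 -> ~ periodic_pair p q c s c s.
Proof.
  unfold periodic_pair; intros H Hpp.
  assert (0 < p * c * c + q * s * s) by (pose proof (pq_weight_ge c s H); nra).
  assert (0 < p * q) by nra.
  nra.
Qed.

Lemma pair_chord_sums (c1 s1 c2 s2 c3 s3 : R) :
  c1^2 + s1^2 = 1 -> c2^2 + s2^2 = 1 -> c3^2 + s3^2 = 1 -> ~ (c2 = c3 /\ s2 = s3) ->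
  periodic_pair p q c1 s1 c2 s2 -> periodic_pair p q c1 s1 c3 s3 ->
  c1 + c2 + c3 = triple_sum_x p q c1 s1 /\ s1 + s2 + s3 = triple_sum_y p q c1 s1.
Proof.
  intros H1 H2 H3 D23 P12 P13.
  pose proof (pq_weight_ge c1 s1 H1).
  assert (Hn : (p * c1)^2 + (q * s1)^2 <> 0) by nra.
  apply periodic_pair_line in P12, P13.
  pose proof (unit_on_line_opposite _ _ _ Hn _ _ _ _ H2 P12 H3 P13 D23) as Hr3.
  destruct (on_line_chord _ _ _ Hn _ _ P12) as [E2 F2].
  destruct (on_line_chord _ _ _ Hn _ _ P13) as [E3 F3].
  rewrite Hr3 in E3, F3.
  set (r := p * c1 * s2 - q * s1 * c2) in *.
  unfold triple_sum_x, triple_sum_y; split.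
  - rewrite E2, E3, Rplus_assoc, (chord_sum_x _ _ _ Hn); field; split; nra.
  - rewrite F2, F3, Rplus_assoc, (chord_sum_y _ _ _ Hn); field; split; nra.
Qed.

Lemma triple_sum_norm_identity (X Y : R) :
  X + Y = 1 ->
  X * ((p + q) * (p^2 * X + q^2 * Y) - 2 * p^2 * q)^2
  + Y * ((p + q) * (p^2 * X + q^2 * Y) - 2 * p * q^2)^2
  = (q - p)^2 * (p^2 * X + q^2 * Y)^2.
Proof. intro H; replace X with (1 - Y) by lra; ring. Qed.

Lemma triple_sum_on_circle (c s : R) :
  c^2 + s^2 = 1 ->
  triple_sum_x p q c s ^ 2 + triple_sum_y p q c s ^ 2 = ((q - p) / (p + q))^2.
Proof.
  intro H; pose proof (pq_weight_ge c s H).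
  unfold triple_sum_x, triple_sum_y.
  transitivity ((c^2 * ((p + q) * (p^2 * c^2 + q^2 * s^2) - 2 * p^2 * q)^2
                 + s^2 * ((p + q) * (p^2 * c^2 + q^2 * s^2) - 2 * p * q^2)^2)
                / ((p + q)^2 * (p^2 * c^2 + q^2 * s^2)^2)); [field; split; nra |].
  rewrite (triple_sum_norm_identity _ _ H); field; split; nra.
Qed.

Lemma chord_pair_identity (X Y : R) :
  X + Y = 1 ->
  (- (p * q) / (p + q))^2 * (p * (p^2 * X) + q * (q^2 * Y))
  - (p^2 * X + q^2 * Y - (- (p * q) / (p + q))^2) * (p * (q^2 * Y) + q * (p^2 * X))
  = - (p * q) / (p + q) * (p^2 * X + q^2 * Y)^2.
Proof. intro H; replace X with (1 - Y) by lra; field; lra. Qed.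

Lemma chord_triangle_exists (c s : R) :
  c^2 + s^2 = 1 ->
  exists c2 s2 c3 s3 : R,
    c2^2 + s2^2 = 1 /\ c3^2 + s3^2 = 1 /\ ~ (c2 = c3 /\ s2 = s3) /\
    periodic_pair p q c s c2 s2 /\ periodic_pair p q c s c3 s3 /\ periodic_pair p q c2 s2 c3 s3.
Proof.
  intro H; pose proof (pq_weight_ge c s H) as HW.
  set (be := - (p * q) / (p + q)).
  set (W := (p * c)^2 + (q * s)^2).
  assert (Hn : W <> 0) by (unfold W; nra).
  assert (Hbe : be^2 < W).
  { assert (E : W - be^2 = (W - p^2) + p^3 * (p + 2 * q) / (p + q)^2) by (unfold be; field; lra).
    assert (0 < p^3 * (p + 2 * q) / (p + q)^2)
      by (apply Rdiv_lt_0_compat; [apply Rmult_lt_0_compat; [apply pow_lt |] | apply pow_lt]; lra).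
    unfold W in *; lra. }
  set (r := sqrt (W - be^2)).
  assert (Hr : r^2 = W - be^2) by (apply pow2_sqrt; lra).
  assert (Hr' : (- r)^2 = W - be^2) by (rewrite <- Hr; ring).
  assert (Hr0 : 0 < r) by (apply sqrt_lt_R0; lra).
  exists (chord_x (p * c) (q * s) be r), (chord_y (p * c) (q * s) be r),
         (chord_x (p * c) (q * s) be (- r)), (chord_y (p * c) (q * s) be (- r)).
  rewrite !periodic_pair_line.
  repeat split.
  - exact (chord_unit _ _ _ Hn _ Hr).
  - exact (chord_unit _ _ _ Hn _ Hr').
  - apply (chord_opposite_distinct _ _ _ Hn); lra.
  - apply chord_on_line; exact Hn.
  - apply chord_on_line; exact Hn.
  - rewrite (chord_diag_product _ _ _ Hn), Hr; unfold W, be.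
    replace ((p * c)^2) with (p^2 * c^2) by ring; replace ((q * s)^2) with (q^2 * s^2) by ring.
    rewrite (chord_pair_identity _ _ H); field; split; nra.
Qed.

Lemma triple_sum_x_opp_c (c s : R) : triple_sum_x p q (- c) s = - triple_sum_x p q c s.
Proof. unfold triple_sum_x; replace ((- c)^2) with (c^2) by ring; ring. Qed.
Lemma triple_sum_y_opp_c (c s : R) : triple_sum_y p q (- c) s = triple_sum_y p q c s.
Proof. unfold triple_sum_y; replace ((- c)^2) with (c^2) by ring; ring. Qed.
Lemma triple_sum_x_opp_s (c s : R) : triple_sum_x p q c (- s) = triple_sum_x p q c s.
Proof. unfold triple_sum_x; replace ((- s)^2) with (s^2) by ring; ring. Qed.
Lemma triple_sum_y_opp_s (c s : R) : triple_sum_y p q c (- s) = - triple_sum_y p q c s.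
Proof. unfold triple_sum_y; replace ((- s)^2) with (s^2) by ring; ring. Qed.

Lemma triple_sum_y_attains (y : R) :
  0 <= y <= (q - p) / (p + q) ->
  exists c s : R, c^2 + s^2 = 1 /\ triple_sum_y p q c s = y.
Proof.
  intro Hy.
  set (g := fun t => triple_sum_y p q (cos t) (sin t) - y).
  assert (Hg : continuity g).
  { intro t; unfold g, triple_sum_y; reg.
    pose proof (pq_weight_ge (cos t) (sin t) (cos_sin_unit t)).
    apply Rmult_integral_contrapositive_currified; nra. }
  assert (Hg0 : g 0 = - y) by (unfold g, triple_sum_y; rewrite sin_0; ring).
  assert (Hg1 : g (PI / 2) = (q - p) / (p + q) - y).
  { unfold g, triple_sum_y; rewrite sin_PI2, cos_PI2; field; lra. }
  destruct (IVT_cor g 0 (PI / 2) Hg) as [t [_ Ht]].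
  - pose proof PI2_RGT_0; lra.
  - rewrite Hg0, Hg1; nra.
  - exists (cos t), (sin t); split; [apply cos_sin_unit | unfold g in Ht; lra].
Qed.

Lemma triple_sum_surjective (x y : R) :
  x^2 + y^2 = ((q - p) / (p + q))^2 ->
  exists c s : R, c^2 + s^2 = 1 /\ triple_sum_x p q c s = x /\ triple_sum_y p q c s = y.
Proof.
  intro Hxy.
  assert (Hrho : 0 < (q - p) / (p + q)) by (apply Rdiv_lt_0_compat; lra).
  assert (Hy : 0 <= Rabs y <= (q - p) / (p + q)).
  { split; [apply Rabs_pos |].
    apply Rsqr_incr_0_var; [| lra]; rewrite !Rsqr_pow2, pow2_abs; nra. }
  destruct (triple_sum_y_attains _ Hy) as [c [s [Hcs Hty]]].
  assert (Htx : triple_sum_x p q c s ^ 2 = x^2).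
  { pose proof (triple_sum_on_circle c s Hcs); rewrite Hty, pow2_abs in H; lra. }
  assert (Hx : triple_sum_x p q c s = x \/ triple_sum_x p q c s = - x).
  { assert (E : (triple_sum_x p q c s - x) * (triple_sum_x p q c s + x) = 0) by nra.
    destruct (Rmult_integral _ _ E); [left | right]; lra. }
  (* the reflections c -> -c and s -> -s fix the signs of the two coordinates *)
  destruct (Rle_dec 0 y) as [Hy0 | Hy0];
    [rewrite Rabs_pos_eq in Hty by lra | rewrite Rabs_left in Hty by lra];
    destruct Hx as [Hx | Hx].
  - exists c, s; auto.
  - exists (- c), s; rewrite triple_sum_x_opp_c, triple_sum_y_opp_c.
    repeat split; [rewrite <- Hcs; ring | lra | lra].
  - exists c, (- s); rewrite triple_sum_x_opp_s, triple_sum_y_opp_s.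
    repeat split; [rewrite <- Hcs; ring | lra | lra].
  - exists (- c), (- s).
    rewrite triple_sum_x_opp_c, triple_sum_y_opp_c, triple_sum_x_opp_s, triple_sum_y_opp_s.
    repeat split; [rewrite <- Hcs; ring | lra | lra].
Qed.

Section Periodics.

Variables a b : R.
Hypotheses (b_pos : 0 < b) (b_lt_a : b < a).
Hypotheses (a_sq : a^2 * (q - p) = q * (q + 2 * p)) (b_sq : b^2 * (q - p) = p * (p + 2 * q)).

Lemma a_sq_sub_b_sq : a^2 - b^2 = p + q.
Proof.
  apply (Rmult_eq_reg_r (q - p)); [| lra].
  transitivity (a^2 * (q - p) - b^2 * (q - p)); [ring | rewrite a_sq, b_sq; ring].
Qed.

Lemma closure_root (m : R) :
  0 < m -> 3 - 2 * m * (a^2 + b^2) - m^2 * (a^2 - b^2)^2 = 0 -> m = (q - p) / (p + q)^2.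
Proof.
  intros Hm Hk.
  assert (E : ((p + q)^2 * m - (q - p)) * ((q - p) * m + 3) = 0).
  { transitivity (- (q - p) * (3 - 2 * m * (a^2 + b^2) - m^2 * (a^2 - b^2)^2));
      [| rewrite Hk; ring].
    replace (- (q - p) * (3 - 2 * m * (a^2 + b^2) - m^2 * (a^2 - b^2)^2))
      with (- 3 * (q - p) + 2 * m * (a^2 * (q - p) + b^2 * (q - p)) + m^2 * (a^2 - b^2)^2 * (q - p))
      by ring.
    rewrite a_sq, b_sq, a_sq_sub_b_sq; ring. }
  assert (0 < (q - p) * m) by (apply Rmult_lt_0_compat; lra).
  assert (0 < (p + q)^2) by (apply pow_lt; lra).
  destruct (Rmult_integral _ _ E); [| lra].
  apply (Rmult_eq_reg_l ((p + q)^2)); [field_simplify; lra | lra].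
Qed.

Lemma gap_eq_mu0_iff (c s c' s' : R) :
  chord_gap c s c' s' = (q - p) / (p + q)^2 * chord_cogap a b c s c' s'
  <-> periodic_pair p q c s c' s'.
Proof.
  assert (E : (p + q)^2 * chord_gap c s c' s' - (q - p) * chord_cogap a b c s c' s'
              = - 2 * ((p + q) * (p * c * c' + q * s * s') + p * q)).
  { unfold chord_gap, chord_cogap.
    replace ((q - p) * (a^2 * (1 - c * c' + s * s') + b^2 * (1 + c * c' - s * s')))
      with (a^2 * (q - p) * (1 - c * c' + s * s') + b^2 * (q - p) * (1 + c * c' - s * s')) by ring.
    rewrite a_sq, b_sq; ring. }
  assert (0 < (p + q)^2) by (apply pow_lt; lra).
  unfold periodic_pair; split; intro Hrel.
  - rewrite Hrel in E; field_simplify in E; lra.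
  - apply (Rmult_eq_reg_l ((p + q)^2)); [field_simplify; lra | lra].
Qed.

Section ForwardPairs.

Variables c1 s1 c2 s2 c3 s3 : R.
Hypotheses (u1_unit : c1^2 + s1^2 = 1) (u2_unit : c2^2 + s2^2 = 1) (u3_unit : c3^2 + s3^2 = 1).

Lemma equal_mu_periodic_pairs (m : R) :
  0 < m -> ~ (c2 = c3 /\ s2 = s3) ->
  chord_gap c1 s1 c2 s2 = m * chord_cogap a b c1 s1 c2 s2 ->
  chord_gap c1 s1 c3 s3 = m * chord_cogap a b c1 s1 c3 s3 ->
  chord_gap c2 s2 c3 s3 = m * chord_cogap a b c2 s2 c3 s3 ->
  periodic_pair p q c1 s1 c2 s2 /\ periodic_pair p q c1 s1 c3 s3 /\ periodic_pair p q c2 s2 c3 s3.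
Proof.
  intros Hm D23 E12 E13 E23.
  assert (Hm0 : m = (q - p) / (p + q)^2).
  { apply closure_root; [exact Hm |].
    apply (closure_equation a b m c1 s1 c2 s2 c3 s3); try assumption;
      apply chord_gap_eq_mu_line; assumption. }
  rewrite Hm0 in E12, E13, E23.
  repeat split; apply gap_eq_mu0_iff; assumption.
Qed.

Lemma periodic3_pairs :
  periodic3 a b (a * c1, b * s1) (a * c2, b * s2) (a * c3, b * s3) ->
  periodic_pair p q c1 s1 c2 s2 /\ periodic_pair p q c1 s1 c3 s3 /\ periodic_pair p q c2 s2 c3 s3.
Proof.
  intros [Hnd [_ [_ [_ [B1 [B2 _]]]]]].
  destruct (nondegenerate_scaled_distinct _ _ _ _ _ _ _ _ Hnd) as [D12 [D13 D23]].
  assert (D21 : ~ (c2 = c1 /\ s2 = s1)) by (intros [e e']; apply D12; split; congruence).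
  assert (D31 : ~ (c3 = c1 /\ s3 = s1)) by (intros [e e']; apply D13; split; congruence).
  assert (D32 : ~ (c3 = c2 /\ s3 = s2)) by (intros [e e']; apply D23; split; congruence).
  assert (Ha : a <> 0) by lra; assert (Hb : b <> 0) by lra.
  rewrite normal_bisects_ellipse_iff in B1, B2 by assumption.
  set (m := chord_mu a b c1 s1 c2 s2) in *.
  assert (Hgap : forall c s c' s', c^2 + s^2 = 1 -> c'^2 + s'^2 = 1 -> ~ (c = c' /\ s = s') ->
            chord_mu a b c s c' s' = m -> chord_gap c s c' s' = m * chord_cogap a b c s c' s').
  { intros c s c' s' H H' D <-.
    pose proof (chord_cogap_pos a b c s c' s' Ha Hb H H').
    unfold chord_mu; field; lra. }
  apply (equal_mu_periodic_pairs m).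
  - unfold m, chord_mu.
    apply Rdiv_lt_0_compat; [apply chord_gap_pos | apply chord_cogap_pos]; assumption.
  - exact D23.
  - apply Hgap; try assumption; reflexivity.
  - apply Hgap; try assumption; symmetry; exact B1.
  - apply Hgap; try assumption; rewrite B2; apply chord_mu_sym.
Qed.

End ForwardPairs.

Lemma periodic_pair_mu (c s c' s' : R) :
  c^2 + s^2 = 1 -> c'^2 + s'^2 = 1 -> periodic_pair p q c s c' s' ->
  chord_mu a b c s c' s' = (q - p) / (p + q)^2.
Proof.
  intros H H' Hpp; apply gap_eq_mu0_iff in Hpp.
  pose proof (chord_cogap_pos a b c s c' s' ltac:(lra) ltac:(lra) H H').
  unfold chord_mu; rewrite Hpp; field; lra.
Qed.

Section Triangle.

Variables c1 s1 c2 s2 c3 s3 : R.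
Hypotheses (u1_unit : c1^2 + s1^2 = 1) (u2_unit : c2^2 + s2^2 = 1) (u3_unit : c3^2 + s3^2 = 1).
Hypothesis u23_distinct : ~ (c2 = c3 /\ s2 = s3).
Hypotheses (P12 : periodic_pair p q c1 s1 c2 s2) (P13 : periodic_pair p q c1 s1 c3 s3)
  (P23 : periodic_pair p q c2 s2 c3 s3).

Lemma periodic3_of_pairs : periodic3 a b (a * c1, b * s1) (a * c2, b * s2) (a * c3, b * s3).
Proof.
  assert (D12 : ~ (c1 = c2 /\ s1 = s2))
    by (intros [<- <-]; exact (periodic_pair_irrefl c1 s1 u1_unit P12)).
  assert (D13 : ~ (c1 = c3 /\ s1 = s3))
    by (intros [<- <-]; exact (periodic_pair_irrefl c1 s1 u1_unit P13)).
  assert (D21 : ~ (c2 = c1 /\ s2 = s1)) by (intros [e e']; apply D12; split; congruence).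
  assert (D31 : ~ (c3 = c1 /\ s3 = s1)) by (intros [e e']; apply D13; split; congruence).
  assert (D32 : ~ (c3 = c2 /\ s3 = s2)) by (intros [e e']; apply u23_distinct; split; congruence).
  assert (Ha : a <> 0) by lra; assert (Hb : b <> 0) by lra.
  assert (Hell : forall c s, c^2 + s^2 = 1 -> on_ellipse a b (a * c, b * s))
    by (intros c s H; unfold on_ellipse; cbn [fst snd]; rewrite <- H; field; split; assumption).
  repeat split; try (apply Hell; assumption).
  - unfold nondegenerate, cross; cbn [fst snd].
    replace ((a * c2 - a * c1) * (b * s3 - b * s1) - (b * s2 - b * s1) * (a * c3 - a * c1))
      with (a * b * ((c2 - c1) * (s3 - s1) - (s2 - s1) * (c3 - c1))) by ring.
    apply Rmult_integral_contrapositive_currified;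
      [apply Rmult_integral_contrapositive_currified; assumption |].
    apply unit_not_collinear; assumption.
  - apply normal_bisects_ellipse_iff; try assumption.
    rewrite (periodic_pair_mu c1 s1 c2 s2), (periodic_pair_mu c1 s1 c3 s3); auto.
  - apply normal_bisects_ellipse_iff; try assumption.
    rewrite (periodic_pair_mu c2 s2 c3 s3), (periodic_pair_mu c2 s2 c1 s1);
      auto using periodic_pair_sym.
  - apply normal_bisects_ellipse_iff; try assumption.
    rewrite (periodic_pair_mu c3 s3 c1 s1), (periodic_pair_mu c3 s3 c2 s2);
      auto using periodic_pair_sym.
Qed.

Lemma center_of_pairs :
  center h5 (a * c1, b * s1) (a * c2, b * s2) (a * c3, b * s3)
  = (a5_pq a p q / ((q - p) / (p + q)) * triple_sum_x p q c1 s1,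
     b5_pq b p q / ((q - p) / (p + q)) * triple_sum_y p q c1 s1).
Proof.
  destruct periodic3_of_pairs as [Hnd _].
  apply periodic_pair_line in P12, P13, P23.
  rewrite (center_h5_equal_products a b p q c1 s1 c2 s2 c3 s3 (- (p * q) / (p + q)))
    by (assumption || lra).
  destruct (pair_chord_sums c1 s1 c2 s2 c3 s3) as [Sx Sy]; try assumption;
    try (apply periodic_pair_line; assumption).
  rewrite Sx, Sy, a_sq_sub_b_sq.
  assert (Ea : a - (p + q) * p / (2 * (p - q) * a)
               = (p^2 + 5 * p * q + 2 * q^2) / (2 * (q - p) * a)).
  { transitivity ((2 * (a^2 * (q - p)) + (p + q) * p) / (2 * (q - p) * a));
      [field | rewrite a_sq; field]; lra. }
  assert (Eb : b - (p + q) * q / (2 * (p - q) * b)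
               = (2 * p^2 + 5 * p * q + q^2) / (2 * (q - p) * b)).
  { transitivity ((2 * (b^2 * (q - p)) + (p + q) * q) / (2 * (q - p) * b));
      [field | rewrite b_sq; field]; lra. }
  rewrite Ea, Eb; unfold a5_pq, b5_pq; f_equal; field; lra.
Qed.

End Triangle.

Lemma locus_h5_pq (x y : R) :
  locus a b h5 (x, y) <-> x^2 / a5_pq a p q ^ 2 + y^2 / b5_pq b p q ^ 2 = 1.
Proof.
  set (rho := (q - p) / (p + q)); set (A := a5_pq a p q); set (B := b5_pq b p q).
  assert (Hrho : 0 < rho) by (apply Rdiv_lt_0_compat; lra).
  assert (HA : 0 < A) by (unfold A, a5_pq; apply Rdiv_lt_0_compat; nra).
  assert (HB : 0 < B) by (unfold B, b5_pq; apply Rdiv_lt_0_compat; nra).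
  assert (Hscale : forall u v, (A / rho * u)^2 / A^2 + (B / rho * v)^2 / B^2 = (u^2 + v^2) / rho^2)
    by (intros; field; lra).
  split.
  - intros [[x1 y1] [[x2 y2] [[x3 y3] [HP Hc]]]].
    assert (Ha : a <> 0) by lra; assert (Hb : b <> 0) by lra.
    pose proof HP as [_ [E1 [E2 [E3 _]]]].
    destruct (on_ellipse_scaled a b x1 y1 Ha Hb E1) as [H1 Q1].
    destruct (on_ellipse_scaled a b x2 y2 Ha Hb E2) as [H2 Q2].
    destruct (on_ellipse_scaled a b x3 y3 Ha Hb E3) as [H3 Q3].
    rewrite Q1, Q2, Q3 in HP, Hc.
    pose proof (nondegenerate_scaled_distinct _ _ _ _ _ _ _ _ (proj1 HP)) as [_ [_ D23]].
    destruct (periodic3_pairs _ _ _ _ _ _ H1 H2 H3 HP) as [P12 [P13 P23]].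
    rewrite center_of_pairs in Hc by assumption.
    injection Hc as <- <-.
    rewrite Hscale, triple_sum_on_circle by assumption; fold rho; field; lra.
  - intro Hxy.
    destruct (triple_sum_surjective (x * rho / A) (y * rho / B)) as [c [s [H1 [Tx Ty]]]].
    { fold rho; transitivity (rho^2 * (x^2 / A^2 + y^2 / B^2)); [field | rewrite Hxy; ring]; lra. }
    destruct (chord_triangle_exists c s H1) as [c2 [s2 [c3 [s3 [H2 [H3 [D23 [P12 [P13 P23]]]]]]]]].
    exists (a * c, b * s), (a * c2, b * s2), (a * c3, b * s3); split.
    + apply periodic3_of_pairs; assumption.
    + rewrite center_of_pairs, Tx, Ty by assumption; fold rho A B; f_equal; field; lra.
Qed.

End Periodics.

End PeriodicPairs.

Section DeltaParameters.

Variables a b : R.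
Hypotheses (b_pos : 0 < b) (b_lt_a : b < a).

Let p := a^2 - delta a b.
Let q := delta a b - b^2.

Lemma delta_sq : delta a b ^ 2 = a^4 - a^2 * b^2 + b^4.
Proof.
  apply pow2_sqrt.
  replace (a^4 - a^2 * b^2 + b^4) with ((a^2 - b^2)^2 + a^2 * b^2) by ring; nra.
Qed.

Lemma delta_nonneg : 0 <= delta a b.
Proof. apply sqrt_pos. Qed.

Lemma delta_p_pos : 0 < p.
Proof.
  pose proof delta_sq; pose proof delta_nonneg.
  assert (0 < b^2 * (a^2 - b^2)) by (apply Rmult_lt_0_compat; nra).
  assert (delta a b ^ 2 < (a^2)^2) by nra.
  unfold p; nra.
Qed.

Lemma delta_p_lt_q : p < q.
Proof.
  pose proof delta_sq; pose proof delta_nonneg.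
  assert (0 < (a^2 - b^2)^2) by (apply pow_lt; nra).
  assert ((a^2 + b^2)^2 < (2 * delta a b)^2) by nra.
  unfold p, q; nra.
Qed.

Lemma delta_a_sq : a^2 * (q - p) = q * (q + 2 * p).
Proof.
  transitivity (q * (q + 2 * p) + (delta a b ^ 2 - (a^4 - a^2 * b^2 + b^4))); [unfold p, q; ring |].
  rewrite delta_sq; ring.
Qed.

Lemma delta_b_sq : b^2 * (q - p) = p * (p + 2 * q).
Proof.
  transitivity (p * (p + 2 * q) + (delta a b ^ 2 - (a^4 - a^2 * b^2 + b^4))); [unfold p, q; ring |].
  rewrite delta_sq; ring.
Qed.

Lemma a5_eq_pq : a5 a b = a5_pq a p q.
Proof.
  assert (E : p^2 + 5 * p * q + 2 * q^2 = - w5' a b + w5'' a b * delta a b).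
  { transitivity (- w5' a b + w5'' a b * delta a b - 2 * (delta a b ^ 2 - (a^4 - a^2 * b^2 + b^4)));
      [unfold p, q, w5', w5''; ring | rewrite delta_sq; ring]. }
  unfold a5, a5_pq; rewrite E; unfold w5, p, q; f_equal; ring.
Qed.

Lemma b5_eq_pq : b5 a b = b5_pq b p q.
Proof.
  assert (E : 2 * p^2 + 5 * p * q + q^2 = - (w5' b a - w5'' b a * delta a b)).
  { transitivity (- (w5' b a - w5'' b a * delta a b)
                  - 2 * (delta a b ^ 2 - (a^4 - a^2 * b^2 + b^4)));
      [unfold p, q, w5', w5''; ring | rewrite delta_sq; ring]. }
  assert (b^2 - a^2 <> 0) by nra.
  unfold b5, b5_pq; rewrite E; unfold w5, p, q; field; split; lra.
Qed.

End DeltaParameters.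

Theorem theorem1 (a b : R) (hb : 0 < b) (hab : b < a) :
  forall x y : R,
    locus a b h5 (x, y) <-> x^2 / (a5 a b)^2 + y^2 / (b5 a b)^2 = 1.
Proof.
  intros x y.
  rewrite a5_eq_pq, (b5_eq_pq a b hb hab).
  apply locus_h5_pq; auto using delta_p_pos, delta_p_lt_q, delta_a_sq, delta_b_sq.
Qed.
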